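(* Let $X$ be a connected involutive rack. If $(V,\pi)$ is a strong irreducible representation of $X$ such that there exists $x_0\in X$ with $\{v\in V:\pi_{x_0}(v)=v\}=\{0\}$, then $V$ is one-dimensional.
   Context: A rack is a set $X$ with a binary operation $\rhd$ such that each $x\mapsto x\rhd y$ is bijective and $(x\rhd y)\rhd z=(x\rhd z)\rhd(y\rhd z)$. $X$ is involutive if $(x\rhd y)\rhd y=x$ for all $x,y$, and connected if for all $x,z\in X$ there is $y$ with $z=x\rhd y$. A stabilizing family of $X$ is a finite family $(u_1,\ldots,u_n)$ with $(\cdots(x\rhd u_1)\cdots)\rhd u_n=x$ for all $x$. A representation of $X$ is a complex vector space $V$ with $\pi:X\to GL(V)$ satisfying $\pi_{x\rhd y}=\pi_y\pi_x\pi_y^{-1}$; it is strong if $\pi_{u_n}\cdots\pi_{u_1}=\mathrm{id}_V$ for every stabilizing family $(u_1,\ldots,u_n)$, and irreducible if its only subspaces invariant under all $\pi_x$ are $\{0\}$ and $V$. *)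

From HB Require Import structures.
From mathcomp Require Import all_boot all_order all_algebra.
From mathcomp Require Import complex reals.
Set Implicit Arguments. Unset Strict Implicit. Unset Printing Implicit Defensive.
Import Order.TTheory GRing.Theory Num.Theory.
Local Open Scope ring_scope.

Definition is_rack (X : Type) (op : X -> X -> X) : Prop :=
  (forall y, bijective (fun x => op x y)) /\
  (forall x y z, op (op x y) z = op (op x z) (op y z)).

Definition rack_involutive (X : Type) (op : X -> X -> X) : Prop :=
  forall x y, op (op x y) y = x.

Definition rack_connected (X : Type) (op : X -> X -> X) : Prop :=
  forall x z, exists y, z = op x y.

Definition stabilizing (X : Type) (op : X -> X -> X) (us : seq X) : Prop :=
  forall x, foldl op x us = x.

(* pi : X -> GL(V) with pi_{x |> y} = pi_y pi_x pi_y^{-1}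
   (stated as pi_{x |> y} o pi_y = pi_y o pi_x). *)
Definition is_rack_rep (F : fieldType) (V : lmodType F) (X : Type)
  (op : X -> X -> X) (pi : X -> {linear V -> V}) : Prop :=
  (forall x, bijective (pi x)) /\
  (forall x y v, pi (op x y) (pi y v) = pi y (pi x v)).

Definition strong_rep (F : fieldType) (V : lmodType F) (X : Type)
  (op : X -> X -> X) (pi : X -> {linear V -> V}) : Prop :=
  forall us : seq X, stabilizing op us ->
    forall v, foldl (fun w u => pi u w) v us = v.

Definition subspace (F : fieldType) (V : lmodType F) (S : V -> Prop) : Prop :=
  S 0 /\ (forall u v, S u -> S v -> S (u + v)) /\
  (forall (c : F) v, S v -> S (c *: v)).

Definition invariant (F : fieldType) (V : lmodType F) (X : Type)
  (pi : X -> {linear V -> V}) (S : V -> Prop) : Prop :=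
  forall x v, S v -> S (pi x v).

Definition irreducible_rep (F : fieldType) (V : lmodType F) (X : Type)
  (pi : X -> {linear V -> V}) : Prop :=
  (exists v : V, v != 0) /\
  (forall S : V -> Prop, subspace S -> invariant pi S ->
     (forall v, S v <-> v = 0) \/ (forall v, S v)).

Definition one_dimensional (F : fieldType) (V : lmodType F) : Prop :=
  exists v : V, v != 0 /\ forall w : V, exists c : F, w = c *: v.

From Pilot Require Import Defs.
From HB Require Import structures.
From mathcomp Require Import all_boot all_order all_algebra.
From mathcomp Require Import complex reals.
Set Implicit Arguments. Unset Strict Implicit. Unset Printing Implicit Defensive.
Import GRing.Theory Num.Theory.
Local Open Scope ring_scope.

(* By involutivity the family (x0, x0) is stabilizing, so strongness gives
   pi_x0^2 = id; for every v the vector v + pi_x0 v is then fixed by pi_x0,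
   hence zero, i.e. pi_x0 = -id.  Connectedness writes every x as x0 |> y, so
   pi_x = pi_y pi_x0 pi_y^-1 = -id as well.  Then every line is invariant and
   irreducibility forces V to be a line. *)

Lemma involution_fixfree_opp (F : fieldType) (V : lmodType F)
    (f : {linear V -> V}) :
  (forall v, f (f v) = v) -> (forall v, f v = v -> v = 0) ->
  forall v, f v = - v.
Proof.
move=> f_invol f_fixfree v.
have fixed_sum : f (v + f v) = v + f v by rewrite linearD /= f_invol addrC.
by apply: (addrI v); rewrite subrr; exact: f_fixfree fixed_sum.
Qed.

Lemma line_subspace (F : fieldType) (V : lmodType F) (v : V) :
  subspace (fun w => exists c, w = c *: v).
Proof.
split; first by exists 0; rewrite scale0r.
split; first by move=> _ _ [a ->] [b ->]; exists (a + b); rewrite scalerDl.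
by move=> c _ [a ->]; exists (c * a); rewrite scalerA.
Qed.

Lemma irreducible_scalar_one_dimensional (F : fieldType) (V : lmodType F)
    (X : Type) (pi : X -> {linear V -> V}) :
  (forall x v, exists c, pi x v = c *: v) -> irreducible_rep pi ->
  one_dimensional V.
Proof.
move=> pi_scalar [[v v_neq0] irr].
have line_invariant : Defs.invariant pi (fun w => exists c, w = c *: v).
  move=> x _ [a ->]; have [c ->] := pi_scalar x (a *: v).
  by exists (c * a); rewrite scalerA.
case: (irr _ (line_subspace v) line_invariant) => [line0 | line_full].
  have /(line0 v).1/eqP : exists c, v = c *: v by exists 1; rewrite scale1r.
  by rewrite (negbTE v_neq0).
by exists v; split.
Qed.

Section InvolutiveRackRep.

Variables (F : fieldType) (V : lmodType F) (X : Type) (op : X -> X -> X).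
Variable pi : X -> {linear V -> V}.
Hypothesis pi_rep : is_rack_rep op pi.

Lemma stabilizing_pair :
  rack_involutive op -> forall x, stabilizing op [:: x; x].
Proof. by move=> op_invol x y /=; rewrite op_invol. Qed.

Lemma strong_rep_involutive : rack_involutive op -> strong_rep op pi ->
  forall x v, pi x (pi x v) = v.
Proof.
by move=> op_invol pi_strong x; apply: pi_strong (stabilizing_pair op_invol x).
Qed.

Lemma rack_rep_opp_conj x y : (forall v, pi x v = - v) ->
  forall v, pi (op x y) v = - v.
Proof.
case: pi_rep => pi_bij pi_conj pi_x_opp v.
have [g _ pi_y_g] := pi_bij y.
by rewrite -(pi_y_g v) pi_conj pi_x_opp linearN.
Qed.

Lemma connected_rep_opp x0 :
  rack_connected op -> (forall v, pi x0 v = - v) -> forall x v, pi x v = - v.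
Proof.
move=> op_conn pi_x0_opp x; have [y ->] := op_conn x0 x.
exact: rack_rep_opp_conj.
Qed.

End InvolutiveRackRep.

Theorem mainTheorem15 (R : realType) (X : Type) (op : X -> X -> X)
  (V : lmodType (complex R)) (pi : X -> {linear V -> V}) :
  is_rack op -> rack_involutive op -> rack_connected op ->
  is_rack_rep op pi -> strong_rep op pi -> irreducible_rep pi ->
  (exists x0 : X, forall v : V, pi x0 v = v -> v = 0) ->
  one_dimensional V.
Proof.
move=> _ op_invol op_conn pi_rep pi_strong pi_irr [x0 x0_fixfree].
have pi_x0_opp : forall v, pi x0 v = - v.
  apply: involution_fixfree_opp x0_fixfree.
  exact: strong_rep_involutive op_invol pi_strong x0.
have pi_opp := connected_rep_opp pi_rep op_conn pi_x0_opp.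
apply: irreducible_scalar_one_dimensional pi_irr => x v.
by exists (-1); rewrite pi_opp scaleN1r.
Qed.
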